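(* Suppose $\gamma=\lambda/L$ (so that $f_\gamma^\lambda=f_{1/L}$, where $f_{1/L}(z):=\min_yf(y)+\frac L2\|y-z\|^2$). Then for every $z\in\Omega_0$, $$\frac{f(z)-f_*}2\le f_{1/L}(z)-f_*\le f(z)-f_*.$$
   Context: $f:\mathbb{R}^d\to\mathbb{R}$ is closed, twice continuously differentiable with $\inf f=f_*>-\infty$ attained, $\tau$-weakly convex on $\mathbb{R}^d$ with $L\ge2\tau>0$, $\lambda>0$. For $\gamma>0$, $f_\gamma^\lambda(x):=\min_yf(y)+\frac\lambda{2\gamma}\|x-y\|^2$. $x_0\in\mathbb{R}^d$ is fixed, $\Delta:=f_\gamma^\lambda(x_0)-\min f_\gamma^\lambda$, $\Omega_0:=\{x:f_\gamma^\lambda(x)-\min f_\gamma^\lambda\le2\Delta\}$, $R_0=\sqrt{\Delta\gamma/(160\lambda)}$, $\Omega:=\mathrm{conv}(\{x:\exists w\in\Omega_0,\|x-w\|\le R_0\})$, and for all $x,y\in\Omega$: $\|\nabla f(x)-\nabla f(y)\|\le L\|x-y\|$ and $\|\nabla f(x)\|^2\le2L(f(x)-f_* )$. *)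

From HB Require Import structures.
From mathcomp Require Import all_boot all_order all_algebra.
From mathcomp Require Import all_classical all_reals all_analysis.
Set Implicit Arguments. Unset Strict Implicit. Unset Printing Implicit Defensive.
Import Order.TTheory GRing.Theory Num.Theory.
Import numFieldNormedType.Exports.
Local Open Scope classical_set_scope.
Local Open Scope ring_scope.

Section Defs.
Variables (R : realType) (d : nat).
Notation V := 'rV[R]_d.

Definition enorm (x : V) : R := Num.sqrt (\sum_(i < d) x ord0 i ^+ 2).

Definition basis_vec (i : 'I_d) : V := delta_mx ord0 i.
Definition grad (f : V -> R) (x : V) : V := \row_i ('D_(basis_vec i) f x).

Definition C2 (f : V -> R) : Prop :=
  (forall x, differentiable f x) /\
  (forall i x, differentiable (fun y => 'D_(basis_vec i) f y) x) /\
  (forall i j, continuous (fun y => 'D_(basis_vec j) (fun z => 'D_(basis_vec i) f z) y)).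

Definition closed_fun (f : V -> R) : Prop :=
  closed [set p : V * R | f p.1 <= p.2].

Definition convex_fun (g : V -> R) : Prop :=
  forall (x y : V) (t : R), 0 <= t <= 1 ->
    g (t *: x + (1 - t) *: y) <= t * g x + (1 - t) * g y.

Definition weakly_convex (tau : R) (f : V -> R) : Prop :=
  convex_fun (fun x => f x + tau / 2 * enorm x ^+ 2).

Definition convex_set_ (A : set V) : Prop :=
  forall (x y : V) (t : R), A x -> A y -> 0 <= t <= 1 -> A (t *: x + (1 - t) *: y).

Definition conv_hull (A : set V) : set V :=
  [set x | forall B : set V, convex_set_ B -> A `<=` B -> B x].

Definition menv (f : V -> R) (c : R) (z : V) : R :=
  inf [set f y + c / 2 * enorm (z - y) ^+ 2 | y in [set: V]].

Definition moreau (f : V -> R) (gamma lambda : R) (x : V) : R :=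
  menv f (lambda / gamma) x.

Definition min_moreau (f : V -> R) (gamma lambda : R) : R :=
  inf (range (moreau f gamma lambda)).

Definition Delta (f : V -> R) (gamma lambda : R) (x0 : V) : R :=
  moreau f gamma lambda x0 - min_moreau f gamma lambda.

Definition Omega0 (f : V -> R) (gamma lambda : R) (x0 : V) : set V :=
  [set x | moreau f gamma lambda x - min_moreau f gamma lambda
           <= 2 * Delta f gamma lambda x0].

Definition R0 (f : V -> R) (gamma lambda : R) (x0 : V) : R :=
  Num.sqrt (Delta f gamma lambda x0 * gamma / (160 * lambda)).

Definition Omega (f : V -> R) (gamma lambda : R) (x0 : V) : set V :=
  conv_hull [set x | exists2 w, Omega0 f gamma lambda x0 w &
                     enorm (x - w) <= R0 f gamma lambda x0].

End Defs.

From HB Require Import structures.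
From mathcomp Require Import all_boot all_order all_algebra.
From mathcomp Require Import all_classical all_reals all_analysis.
From mathcomp Require Import ring lra.
Import Order.TTheory GRing.Theory Num.Theory.
Import numFieldNormedType.Exports.
Local Open Scope classical_set_scope.
Local Open Scope ring_scope.

(* The envelope is bounded above by [f] (take [y = z]).  For the lower bound let
   [y] nearly minimize [f y + L/2 |z - y|^2].  If [y] is not too close to [z],
   then [f y <= menv f L z], so [y] is in the sublevel set [Omega0] and the segment
   [y, z] lies in [Omega]; there the descent lemma at [y], Young's inequality and
   [|grad f y|^2 <= 2L (f y - fstar)] give
   [f z - fstar <= 2 (f y + L/2 |z - y|^2 - fstar)].  If [y] is very close to [z],
   continuity of [f] gives the same bound up to an arbitrarily small error. *)

Section Euclidean.
Variables (R : realType) (d : nat).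
Notation V := 'rV[R]_d.

Definition dot (a b : V) : R := \sum_(i < d) a ord0 i * b ord0 i.

Lemma dotBl (a b w : V) : dot (a - b) w = dot a w - dot b w.
Proof. by rewrite /dot -sumrB; apply: eq_bigr => i _; rewrite !mxE mulrBl. Qed.

Lemma enorm_sq (x : V) : enorm x ^+ 2 = \sum_(i < d) x ord0 i ^+ 2.
Proof. by rewrite /enorm sqr_sqrtr // sumr_ge0 // => i _; rewrite sqr_ge0. Qed.

Lemma enorm_ge0 (x : V) : 0 <= enorm x.
Proof. exact: sqrtr_ge0. Qed.

Lemma enorm0 : enorm (0 : V) = 0.
Proof. by rewrite /enorm big1 ?sqrtr0 // => i _; rewrite mxE expr0n. Qed.

Lemma enormZ (t : R) (x : V) : 0 <= t -> enorm (t *: x) = t * enorm x.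
Proof.
move=> t_ge0; rewrite /enorm (eq_bigr (fun i => t ^+ 2 * x ord0 i ^+ 2)).
  by rewrite -mulr_sumr sqrtrM ?sqr_ge0 // sqrtr_sqr ger0_norm.
by move=> i _; rewrite mxE exprMn.
Qed.

Lemma enorm_coord (x : V) i : `|x ord0 i| <= enorm x.
Proof.
rewrite -sqrtr_sqr /enorm ler_sqrt; last by rewrite sumr_ge0 // => j _; rewrite sqr_ge0.
by rewrite (bigD1 i) //= lerDl sumr_ge0 // => j _; rewrite sqr_ge0.
Qed.

Lemma dot_young (c : R) (a b : V) : 0 < c ->
  dot a b <= c / 2 * enorm a ^+ 2 + c^-1 / 2 * enorm b ^+ 2.
Proof.
move=> c_gt0; rewrite !enorm_sq !mulr_sumr -big_split; apply: ler_sum => i _ /=.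
set x := a ord0 i; set y := b ord0 i.
have -> : c / 2 * x ^+ 2 + c^-1 / 2 * y ^+ 2 = x * y + (c * x - y) ^+ 2 / (2 * c).
  by field; rewrite gt_eqF.
by rewrite lerDl divr_ge0 ?sqr_ge0 // mulr_ge0 // ltW.
Qed.

(* A substitute for Cauchy-Schwarz: Young's inequality with weight [k^-1]. *)
Lemma dot_le_dominated (k : R) (a b : V) : 0 < k -> enorm a <= k * enorm b ->
  dot a b <= k * enorm b ^+ 2.
Proof.
move=> k_gt0 ab; have := dot_young (k^-1) a b; rewrite invr_gt0 invrK => /(_ k_gt0).
have a2 : enorm a ^+ 2 <= k ^+ 2 * enorm b ^+ 2.
  by rewrite -exprMn lerXn2r ?nnegrE ?enorm_ge0 ?(le_trans (enorm_ge0 _) ab).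
have : k^-1 / 2 * enorm a ^+ 2 <= k / 2 * enorm b ^+ 2.
  have -> : k / 2 * enorm b ^+ 2 = k^-1 / 2 * (k ^+ 2 * enorm b ^+ 2).
    by field; rewrite gt_eqF.
  by rewrite ler_wpM2l // divr_ge0 // invr_ge0 ltW.
lra.
Qed.

Lemma derive_grad (f : V -> R) x v : differentiable f x ->
  'D_v f x = dot (grad f x) v.
Proof.
move=> df; rewrite deriveE // {1}(row_sum_delta v) linear_sum /dot.
by apply: eq_bigr => i _; rewrite linearZ /= mxE deriveE // mulrC.
Qed.

Lemma is_derive_line (f : V -> R) (y v : V) (t : R) : derivable f (y + t *: v) v ->
  is_derive t 1 (fun s => f (y + s *: v)) ('D_v f (y + t *: v)).
Proof.
have quot_eq : (fun h : R => h^-1 *: (((fun s => f (y + s *: v)) \o shift t) (h *: 1)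
                                      - f (y + t *: v)))
   = (fun h => h^-1 *: ((f \o shift (y + t *: v)) (h *: v) - f (y + t *: v))).
  by apply: funext => h /=; rewrite [h%:A]mulr1 scalerDl addrCA.
by move=> dv; apply: DeriveDef; rewrite ?/derivable /derive quot_eq.
Qed.

Lemma descent_lemma (f : V -> R) (T : set V) (L : R) (y v : V) :
  (forall x, differentiable f x) -> 0 < L ->
  (forall t, 0 <= t <= 1 -> T (y + t *: v)) ->
  (forall x x', T x -> T x' -> enorm (grad f x - grad f x') <= L * enorm (x - x')) ->
  f (y + v) <= f y + dot (grad f y) v + L / 2 * enorm v ^+ 2.
Proof.
move=> f_diff L_gt0 T_seg grad_lip.
set g0 := dot (grad f y) v; set K := L / 2 * enorm v ^+ 2.
pose id_R : R -> R := id.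
pose psi : R -> R := (fun s => f (y + s *: v)) - g0 \*: id_R - K \*: (id_R * id_R).
have psi_derive (t : R) :
    is_derive t 1 psi (dot (grad f (y + t *: v) - grad f y) v - K * (2 * t)).
  have := is_derive_line f y v t (diff_derivable (v := v) (f_diff (y + t *: v))).
  rewrite derive_grad // dotBl => dphi.
  apply: (is_derive_eq (is_deriveB (is_deriveB dphi (is_deriveZ g0 (is_derive_id t 1)))
     (is_deriveZ K (is_deriveM (is_derive_id t 1) (is_derive_id t 1))))).
  by rewrite /GRing.scale /= -/g0; ring.
have psi_cont : {within `[0, 1], continuous psi}.
  by apply: derivable_within_continuous => t _; case: (psi_derive t).
have [c /[!in_itv] /andP [c_gt0 c_lt1] psi_mvt] :=
  MVT ltr01 (fun t _ => psi_derive t) psi_cont.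
have grad_c : enorm (grad f (y + c *: v) - grad f y) <= L * c * enorm v.
  have := grad_lip _ _ (T_seg c _) (T_seg 0 _).
  rewrite scale0r addr0 addrAC subrr add0r enormZ ?mulrA; last exact: ltW.
  by apply; rewrite ?lexx ?ler01 // !ltW.
have psi_le : psi 1 <= psi 0.
  rewrite -subr_le0 psi_mvt subr0 mulr1 subr_le0.
  have := dot_le_dominated _ _ _ (mulr_gt0 L_gt0 c_gt0) grad_c.
  by rewrite /K; lra.
move: psi_le; rewrite /psi /id_R !fctE /= scale1r scale0r addr0 /GRing.scale /= -/g0; lra.
Qed.

Lemma continuous_enorm_lt (f : V -> R) (z : V) : {for z, continuous f} ->
  forall e, 0 < e -> exists2 del, 0 < del &
    forall y, enorm (z - y) < del -> `|f z - f y| < e.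
Proof.
move=> fz e e_gt0; have /cvgr_dist_lt /(_ e e_gt0) /nbhs_ballP [del del_gt0 fball] := fz.
exists del => // y zy; apply: fball; split => // i j; rewrite (ord1 i).
by have := enorm_coord (z - y) j; rewrite !mxE => /le_lt_trans; apply.
Qed.

Section MoreauEnvelope.
Variables (f : V -> R) (c fstar : R).
Hypotheses (c_ge0 : 0 <= c) (f_ge : forall x, fstar <= f x).

Let penalty_ge0 (x y : V) : 0 <= c / 2 * enorm (x - y) ^+ 2.
Proof. by rewrite mulr_ge0 ?sqr_ge0 ?divr_ge0. Qed.

Let penalized_has_lbound (x : V) :
  has_lbound [set f y + c / 2 * enorm (x - y) ^+ 2 | y in [set: V]].
Proof. by exists fstar => _ [y _ <-]; rewrite -[fstar]addr0 lerD. Qed.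

Lemma menv_le x y : menv f c x <= f y + c / 2 * enorm (x - y) ^+ 2.
Proof. by apply: ge_inf; [apply: penalized_has_lbound | exists y]. Qed.

Lemma menv_le_self x : menv f c x <= f x.
Proof. by have := menv_le x x; rewrite subrr enorm0 expr0n /= mulr0 addr0. Qed.

Lemma menv_ge x : fstar <= menv f c x.
Proof.
apply: lb_le_inf; first by exists (f x + c / 2 * enorm (x - x) ^+ 2), x.
by move=> _ [y _ <-]; rewrite -[fstar]addr0 lerD.
Qed.

Lemma menv_approx x e : 0 < e ->
  exists y, f y + c / 2 * enorm (x - y) ^+ 2 < menv f c x + e.
Proof.
move=> e_gt0.
have nonempty : [set f y + c / 2 * enorm (x - y) ^+ 2 | y in [set: V]] !=set0.
  by exists (f x + c / 2 * enorm (x - x) ^+ 2), x.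
have [|_ [y _ <-] ?] := inf_lt nonempty (_ : menv f c x < menv f c x + e).
  by rewrite ltrDl.
by exists y.
Qed.

End MoreauEnvelope.

Section EnvelopeHalfBound.
Variables (f : V -> R) (L fstar : R) (S T : set V).
Hypotheses (f_diff : forall x, differentiable f x) (L_gt0 : 0 < L)
  (f_ge : forall x, fstar <= f x).
Hypothesis S_segment :
  forall y z, S y -> S z -> forall t, 0 <= t <= 1 -> T (y + t *: (z - y)).
Hypothesis S_menv_le : forall y z, S z -> menv f L y <= menv f L z -> S y.
Hypothesis grad_lip :
  forall x x', T x -> T x' -> enorm (grad f x - grad f x') <= L * enorm (x - x').
Hypothesis grad_sq_le : forall x, T x -> enorm (grad f x) ^+ 2 <= 2 * L * (f x - fstar).

Lemma gap_le_penalized y z : S z -> f y <= menv f L z ->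
  f z - fstar <= 2 * (f y + L / 2 * enorm (z - y) ^+ 2 - fstar).
Proof.
move=> Sz fy_le.
have Sy : S y.
  apply: (S_menv_le y z Sz); apply: le_trans fy_le.
  exact: menv_le_self f L fstar (ltW L_gt0) f_ge y.
have Ty : T y.
  by have := S_segment y z Sy Sz 0; rewrite scale0r addr0; apply; rewrite lexx ler01.
have := descent_lemma f T L y (z - y) f_diff L_gt0 (S_segment y z Sy Sz) grad_lip.
rewrite addrC subrK => descent.
have := dot_young (L^-1) (grad f y) (z - y); rewrite invr_gt0 invrK => /(_ L_gt0) young.
have : L^-1 / 2 * enorm (grad f y) ^+ 2 <= f y - fstar.
  have -> : f y - fstar = L^-1 / 2 * (2 * L * (f y - fstar)) by field; rewrite gt_eqF.
  by rewrite ler_wpM2l ?grad_sq_le // divr_ge0 // invr_ge0 ltW.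
lra.
Qed.

Lemma menv_ge_half z : S z -> (f z - fstar) / 2 <= menv f L z - fstar.
Proof.
move=> Sz; set m := menv f L z.
suff : f z - fstar <= 2 * (m - fstar) by lra.
apply/ler_addgt0Pr => e e_gt0.
have e2_gt0 : 0 < e / 2 by rewrite divr_gt0.
have [del del_gt0 fz_near] :=
  continuous_enorm_lt _ _ (differentiable_continuous (f_diff z)) _ e2_gt0.
have m_ge : fstar <= m := menv_ge f L fstar (ltW L_gt0) f_ge z.
pose eps := Num.min (e / 4) (L * del ^+ 2 / 4).
have eps_gt0 : 0 < eps by rewrite lt_min !divr_gt0 ?mulr_gt0 ?exprn_gt0.
have eps_le_e : eps <= e / 4 by rewrite ge_min lexx.
have [y y_near] := menv_approx f L z _ eps_gt0.
have [far|near] := leP eps (L / 2 * enorm (z - y) ^+ 2).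
  have fy_le : f y <= m by lra.
  have := gap_le_penalized y z Sz fy_le; lra.
have zy_lt : enorm (z - y) < del.
  have eps_le_del : eps <= L * del ^+ 2 / 4 by rewrite ge_min lexx orbT.
  have Ldel_gt0 : 0 < L * del ^+ 2 by rewrite mulr_gt0 ?exprn_gt0.
  rewrite -(ltr_pXn2r (n := 2)) ?nnegrE ?enorm_ge0 ?ltW // -(ltr_pM2l L_gt0).
  lra.
have penalty_ge0 : 0 <= L / 2 * enorm (z - y) ^+ 2.
  by rewrite mulr_ge0 ?sqr_ge0 ?divr_ge0 ?ltW.
have := fz_near y zy_lt; have := ler_norm (f z - f y); lra.
Qed.

End EnvelopeHalfBound.

Lemma conv_hull_segment (A : set V) x y t : A x -> A y -> 0 <= t <= 1 ->
  conv_hull A (t *: x + (1 - t) *: y).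
Proof. by move=> Ax Ay t01 B B_convex AB; apply: B_convex => //; apply: AB. Qed.

Section Sublevel.
Variables (f : V -> R) (gamma lambda : R) (x0 : V).

Lemma Omega_segment y z : Omega0 f gamma lambda x0 y -> Omega0 f gamma lambda x0 z ->
  forall t, 0 <= t <= 1 -> Omega f gamma lambda x0 (y + t *: (z - y)).
Proof.
move=> Oy Oz t t01.
have -> : y + t *: (z - y) = t *: z + (1 - t) *: y.
  by apply/rowP => i; rewrite !mxE; ring.
by apply: conv_hull_segment => //; [exists z | exists y]; rewrite // subrr enorm0 sqrtr_ge0.
Qed.

Lemma Omega0_moreau_le y z : Omega0 f gamma lambda x0 z ->
  moreau f gamma lambda y <= moreau f gamma lambda z -> Omega0 f gamma lambda x0 y.
Proof. by rewrite /Omega0 /=; lra. Qed.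

End Sublevel.

Lemma moreau_menv (f : V -> R) (gamma lambda L : R) : 0 < lambda -> 0 < L ->
  gamma = lambda / L -> moreau f gamma lambda = menv f L.
Proof.
by move=> lambda_gt0 L_gt0 ->; apply: funext => x; rewrite /moreau invf_div mulrC divfK ?gt_eqF.
Qed.

End Euclidean.

Theorem lemma15 (R : realType) (d : nat) (f : 'rV[R]_d -> R)
  (tau L lambda gamma fstar : R) (x0 : 'rV[R]_d) :
  closed_fun f ->
  C2 f ->
  (forall x, fstar <= f x) -> (exists x, f x = fstar) ->
  weakly_convex tau f ->
  0 < 2 * tau -> 2 * tau <= L ->
  0 < lambda -> 0 < gamma ->
  (forall x y, Omega f gamma lambda x0 x -> Omega f gamma lambda x0 y ->
     enorm (grad f x - grad f y) <= L * enorm (x - y)) ->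
  (forall x, Omega f gamma lambda x0 x ->
     enorm (grad f x) ^+ 2 <= 2 * L * (f x - fstar)) ->
  gamma = lambda / L ->
  forall z, Omega0 f gamma lambda x0 z ->
    (f z - fstar) / 2 <= menv f L z - fstar /\ menv f L z - fstar <= f z - fstar.
Proof.
move=> _ [f_diff _] f_ge _ _ tau_gt0 tau_le_L lambda_gt0 _ grad_lip grad_sq_le gammaE z Oz.
have L_gt0 : 0 < L by lra.
have moreauE : moreau f gamma lambda = menv f L by apply: moreau_menv.
split; last by have := @menv_le_self _ _ f L fstar (ltW L_gt0) f_ge z; lra.
apply: (@menv_ge_half _ _ f L fstar (Omega0 f gamma lambda x0) (Omega f gamma lambda x0)) => //.
  exact: Omega_segment.
by move=> y w; rewrite -!moreauE; apply: Omega0_moreau_le.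
Qed.
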